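(* In the general setting of the context, for every $h\in\{0,1,\dots,L-1\}$, $$\mathbb{P}\Big(P_h>\frac{1+2\theta_h}{1-\theta_h}P^*\Big)\le\exp\Big(-\frac{\epsilon^2}{6\gamma}\Big).$$
   Context: General setting. Let $m,k,n$ be positive integers and $b\in\mathbb{R}^m_{++}$. Let $\mathcal G$ be the set of proper, concave, upper semicontinuous functions $f:\mathbb{R}^k\to[-\infty,\infty)$ with bounded superlevel sets such that $\mathrm{dom} f\subset\mathbb{R}^k_+$ and $f(0)=0$. Let $f_1,\dots,f_n\in\mathcal G$ and $A_1,\dots,A_n\in\mathbb{R}_+^{m\times k}$. Let $P^*=\sup\{\sum_{t=1}^n f_t(x_t): x_t\in\mathbb{R}^k,\ \sum_{t=1}^n A_tx_t\le b\}$ and assume $P^*>0$. Let $\gamma>0$ satisfy, for every $t\in[n]$: $(A_tx)_i/b_i\le\gamma$ for all $i\in[m]$ and all $x$ with $f_t(x)\ge0$, and $f_t(x)\le\gamma P^*$ for all $x\in\mathrm{dom} f_t$. Let $\epsilon\in(0,1)$ be such that $L=\log_2(1/\epsilon)$ and $n\epsilon$ are integers. Let $\sigma$ be a uniformly random permutation of $[n]$; probabilities are over $\sigma$. For $h\in\{0,\dots,L-1\}$ let $\theta_h=2^{-(h+1)/2}\epsilon^{1/2}$ and $$P_h=\sup\Big\{\tfrac{1}{2^h\epsilon(1-\theta_h)}\sum_{t=1}^{2^hn\epsilon}f_{\sigma(t)}(x_t)\ :\ x_t\in\mathbb{R}^k,\ \tfrac{1}{2^h\epsilon(1+\theta_h)}\sum_{t=1}^{2^hn\epsilon}A_{\sigma(t)}x_t\le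 b\Big\}.$$ *)

From Stdlib Require Import Reals Classical ClassicalEpsilon.
From mathcomp Require Import all_boot all_fingroup.
Set Implicit Arguments. Unset Strict Implicit. Unset Printing Implicit Defensive.

Open Scope R_scope.

Definition vec (k : nat) := 'I_k -> R.

Definition sumR (n : nat) (P : 'I_n -> bool) (F : 'I_n -> R) : R :=
  \big[Rplus/R0]_(i < n | P i) F i.

(* Extended values in [-oo, +oo): None stands for -oo, Some r for r. *)
Definition xR := option R.

Definition xge (v : xR) (a : R) : Prop :=
  match v with Some r => a <= r | None => False end.

Definition vcomb k (l : R) (x y : vec k) : vec k := fun j => l * x j + (1 - l) * y j.

Definition concave k (f : vec k -> xR) : Prop :=
  forall (x y : vec k) (l a c : R), 0 <= l <= 1 ->
    f x = Some a -> f y = Some c ->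
    exists d, f (vcomb l x y) = Some d /\ l * a + (1 - l) * c <= d.

Definition usc k (f : vec k -> xR) : Prop :=
  forall (alpha : R) (xs : nat -> vec k) (x : vec k),
    (forall p, xge (f (xs p)) alpha) ->
    (forall j, Un_cv (fun p => xs p j) (x j)) ->
    xge (f x) alpha.

Definition bounded_superlevel k (f : vec k -> xR) : Prop :=
  forall alpha : R, exists M : R, forall x : vec k,
    xge (f x) alpha -> forall j, Rabs (x j) <= M.

(* Proper: f never +oo (built into xR) and not identically -oo. *)
Definition proper k (f : vec k -> xR) : Prop := exists x, f x <> None.

Definition zerov k : vec k := fun _ => 0.

Definition inG k (f : vec k -> xR) : Prop :=
  proper f /\ concave f /\ usc f /\ bounded_superlevel f /\
  (forall x, f x <> None -> forall j, 0 <= x j) /\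
  f (fun _ => 0) = Some 0.

Definition mv m k (A : 'I_m -> 'I_k -> R) (x : vec k) (i : 'I_m) : R :=
  sumR (fun _ => true) (fun j => A i j * x j).

(* Set of objective values of the offline problem defining P^* (only feasible
   points with finite objective contribute; points with value -oo do not
   affect the supremum). *)
Definition offline_vals m k n (f : 'I_n -> vec k -> xR)
  (A : 'I_n -> 'I_m -> 'I_k -> R) (b : 'I_m -> R) (v : R) : Prop :=
  exists (x : 'I_n -> vec k) (vals : 'I_n -> R),
    (forall t, f t (x t) = Some (vals t)) /\
    (forall i, sumR (fun _ => true) (fun t => mv (A t) (x t) i) <= b i) /\
    v = sumR (fun _ => true) vals.

Definition theta (eps : R) (h : nat) : R :=
  Rpower 2 (- (INR h + 1) / 2) * sqrt eps.

(* Objective values of the sampled problem defining P_h, for the permutation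
   sigma, with M = 2^h n eps sampled periods (positions t = 0..M-1, i.e. the
   paper's t = 1..M). *)
Definition sample_vals m k n (f : 'I_n -> vec k -> xR)
  (A : 'I_n -> 'I_m -> 'I_k -> R) (b : 'I_m -> R)
  (eps : R) (h M : nat) (sigma : {perm 'I_n}) (v : R) : Prop :=
  exists (x : 'I_n -> vec k) (vals : 'I_n -> R),
    (forall t : 'I_n, (t < M)%N -> f (sigma t) (x t) = Some (vals t)) /\
    (forall i, / (2 ^ h * eps * (1 + theta eps h)) *
               sumR (fun t : 'I_n => (t < M)%N) (fun t => mv (A (sigma t)) (x t) i)
               <= b i) /\
    v = / (2 ^ h * eps * (1 - theta eps h)) *
        sumR (fun t : 'I_n => (t < M)%N) vals.

(* "sup S > c" (sup in the extended reals) unfolds to: some element of S exceeds c. *)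
Definition sup_gt (S : R -> Prop) (c : R) : Prop := exists s, S s /\ c < s.

Definition pb (P : Prop) : bool :=
  if excluded_middle_informative P then true else false.

Definition prob_perm (n : nat) (E : {perm 'I_n} -> Prop) : R :=
  INR #|[set s : {perm 'I_n} | pb (E s)]| / INR #|[set: {perm 'I_n}]|.

From Stdlib Require Import Reals Classical ClassicalEpsilon Lra.
From Stdlib Require Import FunctionalExtensionality PropExtensionality.
From Coquelicot Require Import Coquelicot.
From mathcomp Require Import all_boot all_fingroup.
From HB Require Import structures.
Set Implicit Arguments. Unset Strict Implicit. Unset Printing Implicit Defensive.
Open Scope R_scope.

(* Lagrangian duality for the concave offline problem gives resource prices
   [p >= 0] with [sum_t f_t(x_t) <= Pstar + p.(sum_t A_t x_t - b)]; they form a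
   supergradient at 0 of the perturbed value function, built one coordinate at a
   time. The reduced values [g_t = sup_x f_t(x) - p.(A_t x)] then lie in
   [[0, gamma Pstar]] and satisfy [sum_t g_t + p.b <= Pstar], so a sampled solution of
   value above the threshold forces the first [2^h n eps] reduced values in
   the random order to exceed [2^h eps] times their total by
   [2^h eps theta Pstar]. Products of draws without replacement have expectation
   at most the corresponding power of the mean, so Markov's inequality applied to
   [exp (theta sum / (gamma Pstar))], together with
   [exp x <= 1 + x + 2/3 x^2] on [[0, 1/2]], bounds the probability by
   [exp (- 2^h eps theta^2 / (3 gamma)) = exp (- eps^2 / (6 gamma))]. *)

Lemma Rplus_associative : associative Rplus. Proof. by move=> *; rewrite Rplus_assoc. Qed.
Lemma Rmult_associative : associative Rmult. Proof. by move=> *; rewrite Rmult_assoc. Qed.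
HB.instance Definition _ :=
  Monoid.isComLaw.Build R R0 Rplus Rplus_associative Rplus_comm Rplus_0_l.
HB.instance Definition _ :=
  Monoid.isComLaw.Build R R1 Rmult Rmult_associative Rmult_comm Rmult_1_l.
HB.instance Definition _ := Monoid.isMulLaw.Build R R0 Rmult Rmult_0_l Rmult_0_r.
HB.instance Definition _ :=
  Monoid.isAddLaw.Build R Rmult Rplus Rmult_plus_distr_r Rmult_plus_distr_l.

Section RealBigops.
Variables (I : Type) (r : seq I) (P : pred I).

Lemma Rle_sum (F G : I -> R) :
  (forall i, P i -> F i <= G i) ->
  \big[Rplus/R0]_(i <- r | P i) F i <= \big[Rplus/R0]_(i <- r | P i) G i.
Proof.
move=> FG; elim/big_rec2: _ => [|i x y Pi]; first lra.
by have := FG i Pi; lra.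
Qed.

Lemma Rsum_ge0 (F : I -> R) :
  (forall i, P i -> 0 <= F i) -> 0 <= \big[Rplus/R0]_(i <- r | P i) F i.
Proof.
move=> F0; elim/big_rec: _ => [|i x Pi]; first lra.
by have := F0 i Pi; lra.
Qed.

Lemma Rprod_ge0 (F : I -> R) :
  (forall i, P i -> 0 <= F i) -> 0 <= \big[Rmult/R1]_(i <- r | P i) F i.
Proof.
move=> F0; elim/big_rec: _ => [|i x Pi x0]; first lra.
exact: Rmult_le_pos (F0 i Pi) x0.
Qed.

Lemma Rsum_sub (F G : I -> R) :
  \big[Rplus/R0]_(i <- r | P i) (F i - G i) =
  \big[Rplus/R0]_(i <- r | P i) F i - \big[Rplus/R0]_(i <- r | P i) G i.
Proof. by elim/big_rec3: _ => [|i x y z Pi ->]; lra. Qed.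

Lemma exp_sum (F : I -> R) :
  exp (\big[Rplus/R0]_(i <- r | P i) F i) = \big[Rmult/R1]_(i <- r | P i) exp (F i).
Proof.
elim/big_rec2: _ => [|i x y Pi <-]; first exact: exp_0.
exact: exp_plus.
Qed.

End RealBigops.

Lemma Rsum_const n c : \big[Rplus/R0]_(i < n) c = INR n * c.
Proof.
elim: n => [|n IH]; first by rewrite big_ord0 /=; lra.
by rewrite big_ord_recr IH S_INR /=; lra.
Qed.

Lemma Rle_of_le_add_scaled_eps x C K : 0 <= K ->
  (forall e, 0 < e -> x <= C + K * e) -> x <= C.
Proof.
move=> K0 H; apply: Rle_plus_epsilon => e e0.
have K1 : 0 < K + 1 by lra.
have := H (e / (K + 1)) (Rdiv_lt_0_compat _ _ e0 K1).
have : K * (e / (K + 1)) <= e.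
  apply: (Rmult_le_reg_r (K + 1)) => //; field_simplify; nra.
lra.
Qed.

Definition has_sup (E : R -> Prop) := (exists x, E x) /\ bound E.

Definition supR (E : R -> Prop) : R :=
  match excluded_middle_informative (has_sup E) with
  | left H => proj1_sig (completeness E (proj2 H) (proj1 H))
  | right _ => 0
  end.

Section Supremum.
Variable E : R -> Prop.
Hypothesis hE : has_sup E.

Lemma supR_lub : is_lub E (supR E).
Proof.
rewrite /supR; case: excluded_middle_informative => [H|//].
exact: proj2_sig (completeness E (proj2 H) (proj1 H)).
Qed.

Lemma supR_ub x : E x -> x <= supR E.
Proof. by case: supR_lub => ub _; apply: ub. Qed.

Lemma supR_le C : (forall x, E x -> x <= C) -> supR E <= C.
Proof. by case: supR_lub => _; apply. Qed.

Lemma supR_approx e : 0 < e -> exists x, E x /\ supR E - e < x.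
Proof.
move=> e0; apply: NNPP => Hn.
suff : supR E <= supR E - e by lra.
apply: supR_le => x Ex; apply: Rnot_lt_le => Hx; apply: Hn; by exists x.
Qed.

End Supremum.

Lemma has_sup_intro E x0 B : E x0 -> (forall x, E x -> x <= B) -> has_sup E.
Proof. by move=> E0 EB; split; [exists x0 | exists B]. Qed.

Lemma supR_comb2_le E1 E2 l u C : has_sup E1 -> has_sup E2 -> 0 <= l -> 0 <= u ->
  (forall a c, E1 a -> E2 c -> l * a + u * c <= C) ->
  l * supR E1 + u * supR E2 <= C.
Proof.
move=> H1 H2 l0 u0 HC; apply: (@Rle_of_le_add_scaled_eps _ _ (l + u)); first lra.
move=> e e0.
have [a [Ea Ha]] := supR_approx H1 e0.
have [c [Ec Hc]] := supR_approx H2 e0.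
have := HC a c Ea Ec.
have : l * (supR E1 - e) <= l * a by apply: Rmult_le_compat_l; lra.
have : u * (supR E2 - e) <= u * c by apply: Rmult_le_compat_l; lra.
lra.
Qed.

Lemma choice_fun (I T : Type) (P : I -> T -> Prop) :
  (forall i, exists x, P i x) -> exists g : I -> T, forall i, P i (g i).
Proof.
move=> H; exists (fun i => proj1_sig (constructive_indefinite_description _ (H i))).
by move=> i; exact: proj2_sig (constructive_indefinite_description _ (H i)).
Qed.

Lemma sum_supR_le n (E : 'I_n -> R -> Prop) C :
  (forall t, has_sup (E t)) ->
  (forall a : 'I_n -> R, (forall t, E t (a t)) -> \big[Rplus/R0]_(t < n) a t <= C) ->
  \big[Rplus/R0]_(t < n) supR (E t) <= C.
Proof.
move=> HE HC; apply: (@Rle_of_le_add_scaled_eps _ _ (INR n)); first exact: pos_INR.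
move=> e e0.
have [a Ha] := choice_fun (fun t => supR_approx (HE t) e0).
have := HC a (fun t => proj1 (Ha t)).
have : \big[Rplus/R0]_(t < n) supR (E t) - INR n * e <= \big[Rplus/R0]_(t < n) a t.
  rewrite -Rsum_const -Rsum_sub.
  by apply: Rle_sum => t _; have := proj2 (Ha t); lra.
lra.
Qed.

Lemma concave_slope_le (g : R -> R) s u :
  s < 0 -> 0 < u ->
  (forall l, 0 <= l <= 1 -> l * g s + (1 - l) * g u <= g (l * s + (1 - l) * u)) ->
  (g u - g 0) / u <= (g 0 - g s) / (- s).
Proof.
move=> s0 u0; set l := u / (u - s).
have hl : l * (u - s) = u by rewrite /l; field; lra.
have l01 : 0 <= l <= 1.
  split; first by apply: Rlt_le; apply: Rdiv_lt_0_compat; lra.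
  by apply: (Rmult_le_reg_r (u - s)); lra.
move=> /(_ l l01); have -> : l * s + (1 - l) * u = 0 by rewrite /l; field; lra.
move=> Hc.
have Hc' := Rmult_le_compat_r (u - s) _ _ ltac:(lra) Hc.
have E : (l * g s + (1 - l) * g u) * (u - s) = u * g s - s * g u.
  have -> : (l * g s + (1 - l) * g u) * (u - s) =
    (l * (u - s)) * g s + (u - s) * g u - (l * (u - s)) * g u by ring.
  rewrite hl; ring.
rewrite E in Hc'.
apply: (Rmult_le_reg_r (u * - s)); first nra.
have -> : (g u - g 0) / u * (u * - s) = - s * (g u - g 0) by field; lra.
have -> : (g 0 - g s) / - s * (u * - s) = u * (g 0 - g s) by field; lra.
lra.
Qed.

Lemma concave_mono_supergradient_1d (g : R -> R) be : 0 < be ->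
  (forall s1 s2 l, - be <= s1 -> - be <= s2 -> 0 <= l <= 1 ->
     l * g s1 + (1 - l) * g s2 <= g (l * s1 + (1 - l) * s2)) ->
  (forall s1 s2, - be <= s1 -> s1 <= s2 -> g s1 <= g s2) ->
  exists c, 0 <= c /\ forall s, - be <= s -> g s <= g 0 + c * s.
Proof.
move=> be0 gc gm.
have slope_le s u : - be <= s -> s < 0 -> 0 < u ->
    (g u - g 0) / u <= (g 0 - g s) / (- s).
  by move=> s_be s0 u0; apply: concave_slope_le => // l l01; apply: gc => //; lra.
(* the supergradient is the largest right slope of g at 0 *)
set K := fun y => exists u, 0 < u /\ y = (g u - g 0) / u.
have K1 : K ((g 1 - g 0) / 1) by exists 1; split => //; lra.
have hK : has_sup K.
  apply: (has_sup_intro K1 (B := (g 0 - g (- be)) / (- - be))).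
  by move=> y [u [u0 ->]]; apply: slope_le => //; lra.
exists (supR K); split.
  apply: Rle_trans (supR_ub hK K1).
  by have := gm 0 1 ltac:(lra) ltac:(lra); rewrite Rdiv_1_r; lra.
move=> s s_be; case: (Rtotal_order s 0) => [s0|[->|s0]].
- have : supR K <= (g 0 - g s) / (- s).
    by apply: supR_le => // y [u [u0 ->]]; exact: slope_le.
  have : (g 0 - g s) / (- s) * (- s) = g 0 - g s by field; lra.
  nra.
- by rewrite Rmult_0_r; lra.
- have : (g s - g 0) / s <= supR K by apply: supR_ub => //; exists s.
  have : (g s - g 0) / s * s = g s - g 0 by field; lra.
  nra.
Qed.

Definition upd m (w : 'I_m -> R) (j : 'I_m) (s : R) : 'I_m -> R :=
  fun i => if i == j then s else w i.

Definition dotp m (p w : 'I_m -> R) := \big[Rplus/R0]_(i < m) (p i * w i).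

Section Admissible.
Variables (m : nat) (b : 'I_m -> R).

Definition admissible (w : 'I_m -> R) := forall i, - b i <= w i.

Definition concave_adm (V : ('I_m -> R) -> R) :=
  forall w1 w2 l, admissible w1 -> admissible w2 -> 0 <= l <= 1 ->
    l * V w1 + (1 - l) * V w2 <= V (vcomb l w1 w2).

Definition monotone_adm (V : ('I_m -> R) -> R) :=
  forall w1 w2, admissible w1 -> (forall i, w1 i <= w2 i) -> V w1 <= V w2.

Definition bounded_adm (V : ('I_m -> R) -> R) :=
  exists B, forall w, admissible w -> V w <= B.

Definition depends_only_on (S : {set 'I_m}) (V : ('I_m -> R) -> R) :=
  forall w w', (forall i, i \in S -> w i = w' i) -> V w = V w'.

Hypothesis hb : forall i, 0 < b i.

Lemma admissible0 : admissible (@zerov m).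
Proof. by move=> i; have := hb i; rewrite /zerov; lra. Qed.

Lemma admissible_upd w j s : admissible w -> - b j <= s -> admissible (upd w j s).
Proof. by move=> Hw Hs i; rewrite /upd; case: eqP => [->|]. Qed.

Lemma admissible_vcomb w1 w2 l : admissible w1 -> admissible w2 -> 0 <= l <= 1 ->
  admissible (vcomb l w1 w2).
Proof.
move=> H1 H2 l01 i; rewrite /vcomb; have := H1 i; have := H2 i => a c.
have : l * - b i <= l * w1 i by apply: Rmult_le_compat_l; lra.
have : (1 - l) * - b i <= (1 - l) * w2 i by apply: Rmult_le_compat_l; lra.
lra.
Qed.

Lemma admissible_le w1 w2 : admissible w1 -> (forall i, w1 i <= w2 i) -> admissible w2.
Proof. by move=> H1 H12 i; have := H1 i; have := H12 i; lra. Qed.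

End Admissible.

Lemma upd_id m (w : 'I_m -> R) j : upd w j (w j) = w.
Proof. by apply: functional_extensionality => i; rewrite /upd; case: eqP => [->|]. Qed.

Lemma upd_upd m (w : 'I_m -> R) j s s' : upd (upd w j s') j s = upd w j s.
Proof. by apply: functional_extensionality => i; rewrite /upd; case: eqP. Qed.

Lemma vcomb_upd m (w1 w2 : 'I_m -> R) j s1 s2 l :
  vcomb l (upd w1 j s1) (upd w2 j s2) = upd (vcomb l w1 w2) j (l * s1 + (1 - l) * s2).
Proof. by apply: functional_extensionality => i; rewrite /upd /vcomb; case: eqP. Qed.

Lemma vcomb_zerov m l : vcomb l (@zerov m) (@zerov m) = @zerov m.
Proof. by apply: functional_extensionality => i; rewrite /vcomb /zerov; ring. Qed.

Lemma upd_le m (w1 w2 : 'I_m -> R) j s1 s2 :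
  (forall i, w1 i <= w2 i) -> s1 <= s2 -> forall i, upd w1 j s1 i <= upd w2 j s2 i.
Proof. by move=> H12 Hs i; rewrite /upd; case: eqP. Qed.

Lemma dotp_upd m (p w : 'I_m -> R) j c :
  dotp (upd p j c) w = c * w j + dotp p (upd w j 0).
Proof.
rewrite /dotp (bigD1 j) //= [in RHS](bigD1 j) //= /upd eqxx Rmult_0_r Rplus_0_l.
by congr Rplus; apply: eq_bigr => i /negPf ->.
Qed.

Lemma dotp_upd0 m (p : 'I_m -> R) j s : dotp p (upd (@zerov m) j s) = p j * s.
Proof.
rewrite /dotp (bigD1 j) //= big1 /=; first by rewrite /upd eqxx; ring.
by move=> i /negPf; rewrite /upd /zerov => ->; ring.
Qed.

Section PartialSup.
Variables (m : nat) (b : 'I_m -> R) (V : ('I_m -> R) -> R) (j : 'I_m) (c B : R).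
Hypotheses (hb : forall i, 0 < b i) (Vc : concave_adm b V) (Vm : monotone_adm b V).
Hypotheses (VB : forall w, admissible b w -> V w <= B) (c0 : 0 <= c).

Definition partial_sup_set w y := exists s, - b j <= s /\ y = V (upd w j s) - c * s.

(* eliminates coordinate [j] at the price of the linear term [c * w j] *)
Definition partial_sup w := supR (partial_sup_set w).

Lemma partial_sup_set_ub w y : admissible b w -> partial_sup_set w y -> y <= B + c * b j.
Proof.
move=> hw [s [hs ->]]; have := VB (admissible_upd hw hs).
have : - (c * s) <= c * b j by nra.
lra.
Qed.

Lemma partial_sup_has_sup w : admissible b w -> has_sup (partial_sup_set w).
Proof.
move=> hw; apply: (has_sup_intro (x0 := V (upd w j 0) - c * 0)).
  by exists 0; split => //; have := hb j; lra.
by move=> y; apply: partial_sup_set_ub.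
Qed.

Lemma partial_sup_ge w s : admissible b w -> - b j <= s ->
  V (upd w j s) - c * s <= partial_sup w.
Proof. by move=> hw hs; apply: supR_ub; [exact: partial_sup_has_sup | exists s]. Qed.

Lemma partial_sup_le w C : admissible b w ->
  (forall s, - b j <= s -> V (upd w j s) - c * s <= C) -> partial_sup w <= C.
Proof.
move=> hw HC; apply: supR_le; first exact: partial_sup_has_sup.
by move=> y [s [hs ->]]; exact: HC.
Qed.

Lemma partial_sup_concave : concave_adm b partial_sup.
Proof.
move=> w1 w2 l h1 h2 l01.
apply: supR_comb2_le; try apply: partial_sup_has_sup; try lra; try done.
move=> a1 a2 [s1 [hs1 ->]] [s2 [hs2 ->]].
have hs : - b j <= l * s1 + (1 - l) * s2 by have := hb j; nra.
have := partial_sup_ge (admissible_vcomb h1 h2 l01) hs.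
have := Vc (admissible_upd h1 hs1) (admissible_upd h2 hs2) l01.
rewrite vcomb_upd; lra.
Qed.

Lemma partial_sup_monotone : monotone_adm b partial_sup.
Proof.
move=> w1 w2 h1 h12; apply: partial_sup_le => // s hs.
have := partial_sup_ge (admissible_le h1 h12) hs.
have := Vm (admissible_upd h1 hs) (upd_le j h12 (Rle_refl s)).
lra.
Qed.

Lemma partial_sup_bounded : bounded_adm b partial_sup.
Proof.
exists (B + c * b j) => w hw; apply: partial_sup_le => // s hs.
exact: partial_sup_set_ub hw (ex_intro _ s (conj hs erefl)).
Qed.

Lemma partial_sup_depends S : depends_only_on S V -> depends_only_on (S :\ j) partial_sup.
Proof.
move=> VS w w' ww'; congr supR.
apply: functional_extensionality => y; apply: propositional_extensionality.
have Vww' s : V (upd w j s) = V (upd w' j s).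
  apply: VS => i iS; rewrite /upd; case: eqP => // /eqP ij.
  by apply: ww'; rewrite !inE ij.
by split => -[s [hs ->]]; exists s; rewrite Vww'.
Qed.

Lemma partial_sup_upd w s : partial_sup (upd w j s) = partial_sup w.
Proof.
congr supR; apply: functional_extensionality => y; apply: propositional_extensionality.
by split => -[s' [hs' ->]]; exists s'; rewrite upd_upd.
Qed.

End PartialSup.

Section Supergradient.
Variables (m : nat) (b : 'I_m -> R).
Hypothesis hb : forall i, 0 < b i.

Lemma coordinate_slope V j : concave_adm b V -> monotone_adm b V ->
  exists c, 0 <= c /\
    forall s, - b j <= s -> V (upd (@zerov m) j s) <= V (@zerov m) + c * s.
Proof.
move=> Vc Vm; have e0 : upd (@zerov m) j 0 = @zerov m.
  by apply: functional_extensionality => i; rewrite /upd /zerov; case: eqP.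
rewrite -{2}e0; apply: concave_mono_supergradient_1d (hb j) _ _.
- move=> s1 s2 l h1 h2 l01.
  have -> : upd (@zerov m) j (l * s1 + (1 - l) * s2) =
      vcomb l (upd (@zerov m) j s1) (upd (@zerov m) j s2) by rewrite vcomb_upd vcomb_zerov.
  by apply: Vc => //; apply: admissible_upd => //; exact: admissible0.
- move=> s1 s2 h1 h12; apply: Vm; first by apply: admissible_upd => //; exact: admissible0.
  exact: upd_le (fun i => Rle_refl _) h12.
Qed.

(* Eliminate the coordinates of [S] one at a time with [partial_sup]. *)
Lemma supergradient_support N : forall S : {set 'I_m}, #|S| = N ->
  forall V, concave_adm b V -> monotone_adm b V -> bounded_adm b V ->
  depends_only_on S V ->
  exists p, forall w, admissible b w -> V w <= V (@zerov m) + dotp p w.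
Proof.
elim: N => [|N IH] S hS V Vc Vm [B VB] VS.
  exists (@zerov m) => w _; have -> : V w = V (@zerov m).
    by apply: VS => i; move/cards0_eq: hS => ->; rewrite inE.
  by rewrite /dotp big1 /= => [|i _]; rewrite /zerov; lra.
have [j jS] : exists j, j \in S.
  by apply/set0Pn; apply/eqP => S0; rewrite S0 cards0 in hS.
have hS' : #|S :\ j| = N by move: hS; rewrite (cardsD1 j S) jS add1n => -[].
have [c [c0 Vj]] := coordinate_slope j Vc Vm.
set W := partial_sup b V j c.
have [p' Wp'] : exists p, forall w, admissible b w -> W w <= W (@zerov m) + dotp p w.
  apply: (IH _ hS').
  - exact: partial_sup_concave hb Vc VB c0.
  - exact: partial_sup_monotone hb Vm VB c0.
  - exact: partial_sup_bounded hb VB c0.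
  - exact: partial_sup_depends.
have W0 : W (@zerov m) <= V (@zerov m).
  apply: (partial_sup_le hb VB c0 (admissible0 hb)) => s hs.
  by have := Vj s hs; lra.
exists (upd p' j c) => w hw.
have hw0 : admissible b (upd w j 0) by apply: admissible_upd => //; have := hb j; lra.
have := partial_sup_ge hb VB c0 hw (hw j); rewrite upd_id -(partial_sup_upd b V j c w 0) -/W.
have := Wp' _ hw0; rewrite dotp_upd; lra.
Qed.

Lemma nonneg_supergradient V :
  concave_adm b V -> monotone_adm b V -> bounded_adm b V ->
  exists p, (forall i, 0 <= p i) /\
    forall w, admissible b w -> V w <= V (@zerov m) + dotp p w.
Proof.
move=> Vc Vm Vb.
have [p Vp] := supergradient_support erefl Vc Vm Vb
  (fun w w' H => f_equal V (functional_extensionality _ _ (fun i => H i (in_setT i)))).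
exists p; split => // i.
have hi : admissible b (upd (@zerov m) i 1).
  by apply: admissible_upd; [exact: admissible0 | have := hb i; lra].
have := Vp _ hi; rewrite dotp_upd0.
have : V (@zerov m) <= V (upd (@zerov m) i 1).
  by apply: Vm (admissible0 hb) _ => i'; rewrite /upd /zerov; case: eqP => _; lra.
lra.
Qed.

End Supergradient.

Lemma dotp_sum m n (p : 'I_m -> R) (P : pred 'I_n) (F : 'I_n -> 'I_m -> R) :
  dotp p (fun i => \big[Rplus/R0]_(t < n | P t) F t i) =
  \big[Rplus/R0]_(t < n | P t) dotp p (F t).
Proof. by rewrite /dotp exchange_big /=; apply: eq_bigr => i _; rewrite big_distrr. Qed.

Lemma dotp_sub m (p u v : 'I_m -> R) : dotp p (fun i => u i - v i) = dotp p u - dotp p v.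
Proof. by rewrite /dotp -Rsum_sub; apply: eq_bigr => i _; ring. Qed.

Lemma dotp_scale m (p u : 'I_m -> R) c : dotp p (fun i => c * u i) = c * dotp p u.
Proof. by rewrite /dotp big_distrr /=; apply: eq_bigr => i _; ring. Qed.

Lemma dotp_le m (p u v : 'I_m -> R) :
  (forall i, 0 <= p i) -> (forall i, u i <= v i) -> dotp p u <= dotp p v.
Proof. by move=> p0 uv; apply: Rle_sum => i _; apply: Rmult_le_compat_l. Qed.

Lemma dotp_ge0 m (p u : 'I_m -> R) :
  (forall i, 0 <= p i) -> (forall i, 0 <= u i) -> 0 <= dotp p u.
Proof. by move=> p0 u0; apply: Rsum_ge0 => i _; apply: Rmult_le_pos. Qed.

Lemma dotp_zerov m (p : 'I_m -> R) : dotp p (@zerov m) = 0.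
Proof. by rewrite /dotp big1 // => i _; rewrite /zerov; ring. Qed.

Section MatrixVector.
Variables (m k : nat) (A : 'I_m -> 'I_k -> R).

Lemma mv_zerov : mv A (@zerov k) = @zerov m.
Proof.
apply: functional_extensionality => i.
by rewrite /mv /sumR big1 // => j _; rewrite /zerov; ring.
Qed.

Lemma mv_vcomb l x y i : mv A (vcomb l x y) i = l * mv A x i + (1 - l) * mv A y i.
Proof.
rewrite /mv /sumR !big_distrr -big_split /=.
by apply: eq_bigr => j _; rewrite /vcomb; ring.
Qed.

Lemma mv_ge0 x i : (forall i j, 0 <= A i j) -> (forall j, 0 <= x j) -> 0 <= mv A x i.
Proof. by move=> A0 x0; apply: Rsum_ge0 => j _; apply: Rmult_le_pos. Qed.

End MatrixVector.

Section ClassG.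
Variables (k : nat) (f : vec k -> xR).
Hypothesis hf : inG f.

Lemma inG_zerov : f (@zerov k) = Some 0.
Proof. by case: hf => _ [_ [_ [_ [_ ->]]]]. Qed.

Lemma inG_concave : concave f.
Proof. by case: hf => _ []. Qed.

Lemma inG_dom_nonneg x r : f x = Some r -> forall j, 0 <= x j.
Proof. by case: hf => _ [_ [_ [_ [H _]]]] fx; apply: H; rewrite fx. Qed.

End ClassG.

Section Duality.
Variables (m k n : nat) (b : 'I_m -> R) (f : 'I_n -> vec k -> xR).
Variables (A : 'I_n -> 'I_m -> 'I_k -> R) (Pstar Gm : R).
Hypotheses (hb : forall i, 0 < b i) (hf : forall t, inG (f t)).
Hypotheses (hA : forall t i j, 0 <= A t i j) (hPstar : is_lub (offline_vals f A b) Pstar).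
Hypothesis hgf : forall t (x : vec k) r, f t x = Some r -> r <= Gm.

Definition usage (x : 'I_n -> vec k) (i : 'I_m) :=
  sumR (fun _ => true) (fun t => mv (A t) (x t) i).

Definition perturbed_vals (w : 'I_m -> R) (v : R) : Prop :=
  exists (x : 'I_n -> vec k) (vals : 'I_n -> R),
    (forall t, f t (x t) = Some (vals t)) /\
    (forall i, usage x i <= b i + w i) /\
    v = sumR (fun _ => true) vals.

Definition perturbed_value w := supR (perturbed_vals w).

Lemma usage_ge0 x vals : (forall t, f t (x t) = Some (vals t)) -> forall i, 0 <= usage x i.
Proof.
move=> fx i; apply: Rsum_ge0 => t _.
by apply: mv_ge0; [exact: hA | move=> j; exact: (inG_dom_nonneg (hf t) (fx t) j)].
Qed.

Lemma usage_vcomb l x1 x2 i :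
  usage (fun t => vcomb l (x1 t) (x2 t)) i = l * usage x1 i + (1 - l) * usage x2 i.
Proof.
rewrite /usage /sumR !big_distrr -big_split /=.
by apply: eq_bigr => t _; exact: mv_vcomb.
Qed.

Lemma perturbed_vals_le w v : perturbed_vals w v -> v <= INR n * Gm.
Proof.
move=> [x [vals [fx [_ ->]]]]; rewrite -Rsum_const.
by apply: Rle_sum => t _; exact: hgf (fx t).
Qed.

Lemma perturbed_vals_has_sup w : admissible b w -> has_sup (perturbed_vals w).
Proof.
move=> hw; apply: (has_sup_intro (x0 := 0)); last exact: perturbed_vals_le.
exists (fun _ => @zerov k), (fun _ => 0); split; first by move=> t; rewrite inG_zerov.
split; last by rewrite /sumR big1.
move=> i; rewrite /usage /sumR big1 => [|t _]; first by have := hw i; lra.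
by rewrite mv_zerov.
Qed.

Lemma perturbed_value0 : perturbed_value (@zerov m) = Pstar.
Proof.
apply: is_lub_u hPstar; have -> : offline_vals f A b = perturbed_vals (@zerov m).
  apply: functional_extensionality => v; apply: propositional_extensionality.
  rewrite /perturbed_vals /usage /zerov.
  by split => -[x [vals [fx [Hx ->]]]]; exists x, vals;
    (split; [done | split; [move=> i; have := Hx i; lra | done]]).
exact/supR_lub/perturbed_vals_has_sup/admissible0.
Qed.

Lemma perturbed_value_concave : concave_adm b perturbed_value.
Proof.
move=> w1 w2 l h1 h2 l01.
apply: supR_comb2_le; try apply: perturbed_vals_has_sup; try lra; try done.
move=> v1 v2 [x1 [vals1 [fx1 [Hx1 ->]]]] [x2 [vals2 [fx2 [Hx2 ->]]]].
have [d fd] := choice_fun (fun t => inG_concave (hf t) l01 (fx1 t) (fx2 t)).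
have mem : perturbed_vals (vcomb l w1 w2) (sumR (fun _ => true) d).
  exists (fun t => vcomb l (x1 t) (x2 t)), d; split; first by move=> t; case: (fd t).
  split => // i; rewrite usage_vcomb /vcomb.
  have : l * usage x1 i <= l * (b i + w1 i) by apply: Rmult_le_compat_l; [lra | exact: Hx1].
  have : (1 - l) * usage x2 i <= (1 - l) * (b i + w2 i).
    by apply: Rmult_le_compat_l; [lra | exact: Hx2].
  lra.
apply: Rle_trans (supR_ub (perturbed_vals_has_sup (admissible_vcomb h1 h2 l01)) mem).
rewrite /sumR !big_distrr -big_split /=.
by apply: Rle_sum => t _; case: (fd t).
Qed.

Lemma perturbed_value_monotone : monotone_adm b perturbed_value.
Proof.
move=> w1 w2 h1 h12; apply: supR_le; first exact: perturbed_vals_has_sup.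
move=> v [x [vals [fx [Hx ->]]]].
apply: supR_ub; first exact: perturbed_vals_has_sup (admissible_le h1 h12).
by exists x, vals; split => //; split => // i; have := Hx i; have := h12 i; lra.
Qed.

Lemma perturbed_value_bounded : bounded_adm b perturbed_value.
Proof.
exists (INR n * Gm) => w hw; apply: supR_le; first exact: perturbed_vals_has_sup.
exact: perturbed_vals_le.
Qed.

Lemma lagrange_multipliers : exists p, (forall i, 0 <= p i) /\
  forall (x : 'I_n -> vec k) (vals : 'I_n -> R), (forall t, f t (x t) = Some (vals t)) ->
    sumR (fun _ => true) vals <= Pstar + dotp p (fun i => usage x i - b i).
Proof.
have [p [p0 Vp]] := nonneg_supergradient hb perturbed_value_concave
  perturbed_value_monotone perturbed_value_bounded.
exists p; split => // x vals fx.
have hw : admissible b (fun i => usage x i - b i).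
  by move=> i; have := usage_ge0 fx i; lra.
rewrite -perturbed_value0; apply: Rle_trans (Vp _ hw).
apply: supR_ub; first exact: perturbed_vals_has_sup.
by exists x, vals; split => //; split => // i; lra.
Qed.

Definition reduced_vals (p : 'I_m -> R) t (y : R) :=
  exists x r, f t x = Some r /\ y = r - dotp p (fun i => mv (A t) x i).

Lemma reduced_vals_le p t y : (forall i, 0 <= p i) -> reduced_vals p t y -> y <= Gm.
Proof.
move=> p0 [x [r [fx ->]]]; have := hgf fx.
have : 0 <= dotp p (fun i => mv (A t) x i).
  apply: dotp_ge0 => // i; apply: mv_ge0 => [i' j|]; first exact: hA.
  exact: (inG_dom_nonneg (hf t) fx).
lra.
Qed.

Lemma reduced_vals0 p t : reduced_vals p t 0.
Proof.
exists (@zerov k), 0; rewrite inG_zerov // mv_zerov dotp_zerov.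
by split => //; ring.
Qed.

(* [g t] is the best value of period [t] once resources are priced at [p] *)
Lemma reduced_values : exists (p : 'I_m -> R) (g : 'I_n -> R),
  [/\ forall i, 0 <= p i,
      forall t x r, f t x = Some r -> r - dotp p (fun i => mv (A t) x i) <= g t,
      forall t, 0 <= g t <= Gm &
      \big[Rplus/R0]_(t < n) g t + dotp p b <= Pstar].
Proof.
have [p [p0 Lp]] := lagrange_multipliers.
have hG t : has_sup (reduced_vals p t).
  exact: has_sup_intro (reduced_vals0 p t) (fun y => reduced_vals_le p0).
exists p, (fun t => supR (reduced_vals p t)); split => //.
- by move=> t x r fx; apply: supR_ub => //; exists x, r.
- move=> t; split; first exact: supR_ub (reduced_vals0 p t).
  by apply: supR_le => // y; exact: reduced_vals_le.
suff : \big[Rplus/R0]_(t < n) supR (reduced_vals p t) <= Pstar - dotp p b by lra.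
apply: sum_supR_le => // a Ha.
have /choice_fun [xr Hxr] : forall t, exists q : vec k * R,
    f t q.1 = Some q.2 /\ a t = q.2 - dotp p (fun i => mv (A t) q.1 i).
  by move=> t; case: (Ha t) => x [r H]; exists (x, r).
have := Lp (fun t => (xr t).1) (fun t => (xr t).2) (fun t => proj1 (Hxr t)).
rewrite dotp_sub /usage /sumR dotp_sum.
have -> : \big[Rplus/R0]_(t < n) a t =
    \big[Rplus/R0]_(t < n) (xr t).2 -
    \big[Rplus/R0]_(t < n) dotp p (fun i => mv (A t) (xr t).1 i).
  by rewrite -Rsum_sub; apply: eq_bigr => t _; rewrite (proj2 (Hxr t)).
lra.
Qed.

End Duality.

Section SampledEvent.
Variables (m k n : nat) (f : 'I_n -> vec k -> xR) (A : 'I_n -> 'I_m -> 'I_k -> R).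
Variables (b p : 'I_m -> R) (g : 'I_n -> R) (Pstar : R).
Hypotheses (hp : forall i, 0 <= p i) (hg0 : forall t, 0 <= g t).
Hypothesis hg : forall t x r, f t x = Some r -> r - dotp p (fun i => mv (A t) x i) <= g t.
Hypothesis hG : \big[Rplus/R0]_(t < n) g t + dotp p b <= Pstar.

(* Pricing the sampled constraint at [p] turns a large sampled value into a
   large sampled sum of reduced values. *)
Lemma sampled_reduced_sum_gt eps h M (sigma : {perm 'I_n}) :
  0 <= theta eps h < 1 -> 0 < 2 ^ h * eps ->
  sup_gt (sample_vals f A b eps h M sigma)
     ((1 + 2 * theta eps h) / (1 - theta eps h) * Pstar) ->
  2 ^ h * eps * \big[Rplus/R0]_(t < n) g t + 2 ^ h * eps * theta eps h * Pstar <
  \big[Rplus/R0]_(t < n | (t < M)%N) g (sigma t).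
Proof.
move=> th01 al0 [v [[x [vals [fx [Hx ->]]]] Hv]].
set th := theta eps h in th01 Hv Hx *; set al := 2 ^ h * eps in al0 Hv Hx *.
set G := \big[Rplus/R0]_(t < n) g t.
set S := \big[Rplus/R0]_(t < n | (t < M)%N) g (sigma t).
set SV := sumR (fun t : 'I_n => (t < M)%N) vals in Hv *.
set U := fun i => sumR (fun t : 'I_n => (t < M)%N) (fun t => mv (A (sigma t)) (x t) i).
have SV_le : SV <= S + dotp p U.
  rewrite /U /sumR dotp_sum /S -big_split /=.
  by apply: Rle_sum => t ht; have := hg (fx t ht); lra.
have U_le i : U i <= al * (1 + th) * b i.
  have := Hx i; rewrite -/(U i) => H.
  have -> : U i = al * (1 + th) * (/ (al * (1 + th)) * U i) by field; lra.
  by apply: Rmult_le_compat_l; [nra | lra].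
have pU_le : dotp p U <= al * (1 + th) * dotp p b.
  by rewrite -dotp_scale; exact: dotp_le.
have SV_gt : al * (1 + 2 * th) * Pstar < SV.
  have -> : al * (1 + 2 * th) * Pstar =
      al * (1 - th) * ((1 + 2 * th) / (1 - th) * Pstar) by field; lra.
  have -> : SV = al * (1 - th) * (/ (al * (1 - th)) * SV) by field; nra.
  by apply: Rmult_lt_compat_l => //; nra.
have G0 : 0 <= G by apply: Rsum_ge0 => t _.
have := hG; rewrite -/G => hG'.
have : al * (1 + th) * dotp p b <= al * (1 + th) * (Pstar - G).
  by apply: Rmult_le_compat_l; [nra | lra].
have : 0 <= al * th * G by apply: Rmult_le_pos => //; nra.
nra.
Qed.

End SampledEvent.

Lemma INR_card_set (T : finType) (P : pred T) :
  INR #|[set s | P s]| = \big[Rplus/R0]_(s : T) (if P s then 1 else 0).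
Proof.
have -> : \big[Rplus/R0]_(s : T) (if P s then 1 else 0) =
    \big[Rplus/R0]_(s in [set s | P s]) 1.
  by rewrite [RHS]big_mkcond /=; apply: eq_bigr => s _; rewrite inE.
rewrite big_const; elim: #|_| => [|c IH] //.
by rewrite iterS -IH S_INR /=; lra.
Qed.

Lemma card_perm_gt0 n : 0 < INR #|{perm 'I_n}|.
Proof. by apply/lt_0_INR/ltP/card_gt0P; exists 1%g. Qed.

Section SamplingWithoutReplacement.
Variables (n : nat) (z : 'I_n -> R).
Hypothesis hz : forall t, 0 <= z t.

Definition prefix_prod (j : nat) (s : {perm 'I_n}) :=
  \big[Rmult/R1]_(t < n | (t < j)%N) z (s t).

Definition sum_prefix_prod j := \big[Rplus/R0]_(s : {perm 'I_n}) prefix_prod j s.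

(* [prefix_weight j l] is [n!] times the expectation of
   [prod_(t < j) z (s t) * z (s l)] over a uniform permutation [s]. *)
Definition prefix_weight j (l : 'I_n) :=
  \big[Rplus/R0]_(s : {perm 'I_n}) (prefix_prod j s * z (s l)).

Lemma sum_perm_mulg (H : {perm 'I_n} -> R) tau :
  \big[Rplus/R0]_(s : {perm 'I_n}) H s = \big[Rplus/R0]_(s : {perm 'I_n}) H (tau * s)%g.
Proof. exact: (reindex_inj (mulgI tau)). Qed.

Lemma prefix_prod_mulg j (s tau : {perm 'I_n}) :
  (forall t : 'I_n, (tau t < j)%N = (t < j)%N) -> prefix_prod j (tau * s)%g = prefix_prod j s.
Proof.
move=> tau_j; rewrite /prefix_prod (reindex_inj (@perm_inj _ tau^-1)) /=.
apply: eq_big => t; first by rewrite -tau_j permKV.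
by rewrite permM permKV.
Qed.

Lemma prefix_weight_swap j (a l : 'I_n) :
  (a < j)%N = (l < j)%N -> prefix_weight j l = prefix_weight j a.
Proof.
move=> alj; rewrite /prefix_weight (sum_perm_mulg _ (tperm a l)).
apply: eq_bigr => s _; rewrite prefix_prod_mulg ?permM ?tpermR //.
by move=> t; case: tpermP => [->|->|].
Qed.

(* An AM-GM step: swapping [t0] and [l] shows that [z (s t0) ^ 2] and
   [z (s l) ^ 2] have the same weight. *)
Lemma prefix_weight_free_le j (t0 l : 'I_n) :
  (t0 < j)%N -> (j <= l)%N -> prefix_weight j l <= prefix_weight j t0.
Proof.
move=> t0j jl.
set Q := fun s : {perm 'I_n} =>
  \big[Rmult/R1]_(t < n | (t < j)%N && (t != t0)) z (s t).
have PQ s : prefix_prod j s = z (s t0) * Q s by rewrite /prefix_prod (bigD1 t0).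
have Q_swap s : Q (tperm t0 l * s)%g = Q s.
  rewrite /Q (reindex_inj (@perm_inj _ (tperm t0 l)^-1)) /=.
  apply: eq_big => [t|t _]; last by rewrite permM tpermV tpermK.
  have lj : (l < j)%N = false by rewrite ltnNge jl.
  by rewrite tpermV; case: tpermP => [->|->|//]; rewrite lj eqxx !andbF.
have Q0 s : 0 <= Q s by exact: Rprod_ge0.
have sq_swap : \big[Rplus/R0]_(s : {perm 'I_n}) (Q s * (z (s l) * z (s l))) =
               \big[Rplus/R0]_(s : {perm 'I_n}) (Q s * (z (s t0) * z (s t0))).
  rewrite (sum_perm_mulg _ (tperm t0 l)).
  by apply: eq_bigr => s _; rewrite Q_swap permM tpermR.
suff : 2 * prefix_weight j l <= 2 * prefix_weight j t0 by lra.
rewrite /prefix_weight !big_distrr /=.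
have -> : \big[Rplus/R0]_(s : {perm 'I_n}) (2 * (prefix_prod j s * z (s t0))) =
    \big[Rplus/R0]_(s : {perm 'I_n}) (Q s * (z (s t0) * z (s t0))) +
    \big[Rplus/R0]_(s : {perm 'I_n}) (Q s * (z (s l) * z (s l))).
  by rewrite sq_swap -big_split /=; apply: eq_bigr => s _; rewrite PQ; ring.
rewrite -big_split /=; apply: Rle_sum => s _; rewrite PQ.
have := Q0 s; have := Rle_0_sqr (z (s t0) - z (s l)); rewrite /Rsqr; nra.
Qed.

Lemma sum_prefix_prod0 : sum_prefix_prod 0 = INR #|{perm 'I_n}|.
Proof.
rewrite -cardsT (INR_card_set xpredT).
by apply: eq_bigr => s _; rewrite /prefix_prod big_pred0.
Qed.

Lemma sum_prefix_prodS j (hj : (j < n)%N) :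
  sum_prefix_prod j.+1 = prefix_weight j (Ordinal hj).
Proof.
apply: eq_bigr => s _; rewrite /prefix_prod (bigD1 (Ordinal hj)) //= Rmult_comm.
congr Rmult; apply: eq_bigl => t; rewrite ltnS.
case: (ltngtP t j) => [tj|//|tj] /=.
  by apply/negP => /eqP te; move: tj; rewrite te ltnn.
by apply/negbF/eqP/val_inj.
Qed.

Lemma sum_prefix_weight j :
  \big[Rplus/R0]_(l < n) prefix_weight j l = (\big[Rplus/R0]_(t < n) z t) * sum_prefix_prod j.
Proof.
rewrite /prefix_weight exchange_big /sum_prefix_prod Rmult_comm big_distrl /=.
apply: eq_bigr => s _; rewrite -big_distrr /=; congr Rmult.
by rewrite [RHS](reindex_inj (@perm_inj _ s)).
Qed.

(* Conditioning on the first [j] draws can only lower the next one: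
   sampling without replacement is negatively correlated. *)
Lemma sum_prefix_prod_step j : (j < n)%N ->
  INR n * sum_prefix_prod j.+1 <= (\big[Rplus/R0]_(t < n) z t) * sum_prefix_prod j.
Proof.
move=> hj; rewrite -sum_prefix_weight sum_prefix_prodS -Rsum_const.
apply: Rle_sum => l _.
have n0 : (0 < n)%N by exact: leq_ltn_trans (leq0n j) hj.
case: (ltnP l j) => lj.
  have j0 : (0 < j)%N by exact: leq_ltn_trans (leq0n l) lj.
  rewrite (@prefix_weight_swap j (Ordinal n0) l) /=; last by rewrite lj j0.
  exact: prefix_weight_free_le.
rewrite (@prefix_weight_swap j l (Ordinal hj)) /= ?ltnn; first exact: Rle_refl.
by rewrite ltnNge lj.
Qed.

Lemma mean_prefix_prod_le M : (0 < n)%N -> (M <= n)%N ->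
  sum_prefix_prod M / INR #|{perm 'I_n}| <= ((\big[Rplus/R0]_(t < n) z t) / INR n) ^ M.
Proof.
move=> n0; have nR : 0 < INR n by apply/lt_0_INR/ltP.
have card0 := card_perm_gt0 n.
have Z0 : 0 <= \big[Rplus/R0]_(t < n) z t by exact: Rsum_ge0.
set Z := \big[Rplus/R0]_(t < n) z t in Z0 *.
elim: M => [|M IH] hM; first by rewrite sum_prefix_prod0 /=; apply: Req_le; field; lra.
have := sum_prefix_prod_step hM; rewrite -/Z => step.
rewrite /=; apply: Rle_trans (Rmult_le_compat_l (Z / INR n) _ _ _ (IH (ltnW hM))).
  have -> : Z / INR n * (sum_prefix_prod M / INR #|{perm 'I_n}|) =
      Z * sum_prefix_prod M / INR n / INR #|{perm 'I_n}| by field; lra.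
  apply: Rmult_le_compat_r; first exact/Rlt_le/Rinv_0_lt_compat.
  apply: (Rmult_le_reg_l (INR n)) => //.
  by have -> : INR n * (Z * sum_prefix_prod M / INR n) = Z * sum_prefix_prod M by field; lra.
exact: Rle_mult_inv_pos.
Qed.

End SamplingWithoutReplacement.

Lemma nonneg_of_deriv_nonneg (F F' : R -> R) a :
  (forall x, 0 <= x <= a -> is_derive F x (F' x)) ->
  (forall x, 0 <= x <= a -> 0 <= F' x) -> 0 <= F 0 ->
  forall x, 0 <= x <= a -> 0 <= F x.
Proof.
move=> dF F'0 F0 x x0a; case: (Rle_lt_or_eq_dec 0 x (proj1 x0a)) => [x0|<-] //.
have [c [c0 [cx ->]]] : exists c, 0 <= c /\ c <= x /\ F x = F 0 + F' c * (x - 0).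
  by apply: MVT_cor3 => // y y0 yx; apply/is_derive_Reals/dF; lra.
by have := F'0 c ltac:(lra); nra.
Qed.

Lemma exp_le_2 x : x <= 1/2 -> exp x <= 2.
Proof.
move=> x_half.
have e1 : exp (1/2) * exp (1/2) = exp 1 by rewrite -exp_plus; congr exp; lra.
have : exp x <= exp (1/2).
  by case: (Rle_lt_or_eq_dec _ _ x_half) => [/exp_increasing|->]; lra.
by have := exp_le_3; have := exp_pos (1/2); nra.
Qed.

(* Each bracket is the derivative of the next one, and they all vanish at 0. *)
Lemma exp_le_quadratic x : 0 <= x <= 1/2 -> exp x <= 1 + x + 2/3 * x ^ 2.
Proof.
move=> x01.
have D2 : forall y, 0 <= y <= 1/2 -> 0 <= 1 + 2 * y - exp y.
  apply: (nonneg_of_deriv_nonneg (F' := fun y => 2 - exp y)).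
  - by move=> y _; auto_derive => //; ring.
  - by move=> y y01; have := @exp_le_2 y ltac:(lra); lra.
  - by rewrite exp_0; lra.
have D1 : forall y, 0 <= y <= 1/2 -> 0 <= 1 + y + y ^ 2 - exp y.
  apply: (nonneg_of_deriv_nonneg (F' := fun y => 1 + 2 * y - exp y)) => //.
  - by move=> y _; auto_derive => //; ring.
  - by rewrite exp_0; lra.
have D0 : forall y, 0 <= y <= 1/2 -> 0 <= 1 + y + y ^ 2 / 2 + y ^ 3 / 3 - exp y.
  apply: (nonneg_of_deriv_nonneg (F' := fun y => 1 + y + y ^ 2 - exp y)) => //.
  - by move=> y _; auto_derive => //; field.
  - by rewrite exp_0; lra.
by have := D0 x x01; nra.
Qed.

Lemma exp_pow x M : exp x ^ M = exp (INR M * x).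
Proof.
elim: M => [|M IH]; first by rewrite /= Rmult_0_l exp_0.
by rewrite S_INR /= IH -exp_plus; congr exp; ring.
Qed.

Lemma mean_exp_le n (y : 'I_n -> R) th : (0 < n)%N ->
  (forall t, 0 <= y t <= 1) -> 0 <= th <= 1/2 ->
  (\big[Rplus/R0]_(t < n) exp (th * y t)) / INR n <=
  exp ((th + 2/3 * th ^ 2) * (\big[Rplus/R0]_(t < n) y t) / INR n).
Proof.
move=> n0 y01 th01; have nR : 0 < INR n by apply: lt_0_INR; apply/ltP.
set kap := th + 2/3 * th ^ 2.
have exp_y t : exp (th * y t) <= 1 + kap * y t.
  have := y01 t => yt.
  have := @exp_le_quadratic (th * y t) ltac:(nra).
  have : th ^ 2 * (y t * y t) <= th ^ 2 * y t by apply: Rmult_le_compat_l; nra.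
  rewrite /kap; nra.
have : \big[Rplus/R0]_(t < n) exp (th * y t) <= INR n + kap * \big[Rplus/R0]_(t < n) y t.
  have : \big[Rplus/R0]_(t < n) exp (th * y t) <= \big[Rplus/R0]_(t < n) (1 + kap * y t).
    by apply: Rle_sum => t _; exact: exp_y.
  by rewrite big_split /= Rsum_const big_distrr /=; lra.
move=> sum_le; apply: Rle_trans (exp_ineq1_le _).
apply: (Rmult_le_reg_r (INR n)) => //.
have -> : (\big[Rplus/R0]_(t < n) exp (th * y t)) / INR n * INR n =
  \big[Rplus/R0]_(t < n) exp (th * y t) by field; lra.
have -> : (1 + kap * \big[Rplus/R0]_(t < n) y t / INR n) * INR n =
  INR n + kap * \big[Rplus/R0]_(t < n) y t by field; lra.
done.
Qed.

Lemma pbP (P : Prop) : pb P -> P.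
Proof. by rewrite /pb; case: excluded_middle_informative. Qed.

Lemma prob_perm_le_mean n (E : {perm 'I_n} -> Prop) (X : {perm 'I_n} -> R) :
  (forall s, 0 <= X s) -> (forall s, E s -> 1 <= X s) ->
  prob_perm E <= (\big[Rplus/R0]_(s : {perm 'I_n}) X s) / INR #|{perm 'I_n}|.
Proof.
move=> X0 EX; rewrite /prob_perm cardsT INR_card_set.
apply: Rmult_le_compat_r; first exact/Rlt_le/Rinv_0_lt_compat/card_perm_gt0.
by apply: Rle_sum => s _; case: ifP => [/pbP/EX|_].
Qed.

Section SampledSumTail.
Variables (n M : nat) (g : 'I_n -> R) (c th : R).
Hypotheses (n0 : (0 < n)%N) (Mn : (M <= n)%N) (c0 : 0 < c).
Hypotheses (g0c : forall t, 0 <= g t <= c) (th01 : 0 <= th <= 1/2).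

Let z t := exp (th * (g t / c)).

Lemma prefix_prod_tilt s :
  prefix_prod z M s = exp (th * (\big[Rplus/R0]_(t < n | (t < M)%N) g (s t)) / c).
Proof.
rewrite /prefix_prod -exp_sum /Rdiv Rmult_assoc big_distrl big_distrr /=.
by congr exp; apply: eq_bigr => t _; rewrite /z /Rdiv Rmult_assoc.
Qed.

Lemma mean_prefix_prod_tilt :
  sum_prefix_prod z M / INR #|{perm 'I_n}| <=
  exp (INR M / INR n * (th + 2/3 * th ^ 2) * (\big[Rplus/R0]_(t < n) g t) / c).
Proof.
have nR : 0 < INR n by apply/lt_0_INR/ltP.
have z0 t : 0 <= z t by exact/Rlt_le/exp_pos.
apply: Rle_trans (mean_prefix_prod_le z0 n0 Mn) _.
have y01 t : 0 <= g t / c <= 1.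
  have := g0c t => gt; split; first by apply: Rle_mult_inv_pos; lra.
  by apply: (Rmult_le_reg_r c) => //; field_simplify; lra.
have := mean_exp_le n0 y01 th01; rewrite -big_distrl /= => mean_z.
apply: Rle_trans (pow_incr _ _ M (conj _ mean_z)) _.
  by apply: Rle_mult_inv_pos => //; apply: Rsum_ge0 => t _; exact/Rlt_le/exp_pos.
by rewrite exp_pow; apply: Req_le; congr exp; field; lra.
Qed.

Lemma sampled_sum_tail a (E : {perm 'I_n} -> Prop) :
  (forall s, E s -> a < \big[Rplus/R0]_(t < n | (t < M)%N) g (s t)) ->
  prob_perm E <=
  exp (INR M / INR n * (th + 2/3 * th ^ 2) * (\big[Rplus/R0]_(t < n) g t) / c - th * a / c).
Proof.
move=> Ea; set K := exp (- (th * a / c)).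
set X := fun s => K * prefix_prod z M s.
have X0 s : 0 <= X s.
  apply: Rmult_le_pos; first exact/Rlt_le/exp_pos.
  by apply: Rprod_ge0 => t _; exact/Rlt_le/exp_pos.
have EX s : E s -> 1 <= X s.
  move=> /Ea Es; rewrite /X /K prefix_prod_tilt -exp_plus.
  apply: Rle_trans (exp_ineq1_le _).
  suff : 0 <= th * (\big[Rplus/R0]_(t < n | (t < M)%N) g (s t) - a) / c by lra.
  by apply: Rle_mult_inv_pos => //; nra.
apply: Rle_trans (prob_perm_le_mean X0 EX) _.
rewrite /Rminus exp_plus Rmult_comm -/K /X -big_distrr /= /Rdiv Rmult_assoc.
by apply: Rmult_le_compat_l; [exact/Rlt_le/exp_pos | exact: mean_prefix_prod_tilt].
Qed.

End SampledSumTail.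

Lemma exp_le_exp x y : x <= y -> exp x <= exp y.
Proof. by case/Rle_lt_or_eq_dec => [/exp_increasing/Rlt_le|->] //; exact: Rle_refl. Qed.

Lemma INR_expn (a e : nat) : INR (a ^ e)%N = INR a ^ e.
Proof.
elim: e => [|e IH]; first by rewrite expn0.
by rewrite expnS mult_INR IH.
Qed.

Lemma theta_pos eps h : 0 < eps -> 0 < theta eps h.
Proof. by move=> eps0; apply: Rmult_lt_0_compat; [exact: exp_pos | exact: sqrt_lt_R0]. Qed.

Lemma theta_sq eps h : 0 < eps -> theta eps h ^ 2 = eps / (2 * 2 ^ h).
Proof.
move=> eps0; have p0 : 0 < 2 ^ h by apply: pow_lt; lra.
set r := Rpower 2 (- (INR h + 1) / 2).
have rr : r * r = / (2 * 2 ^ h).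
  rewrite /r -Rpower_plus.
  have -> : - (INR h + 1) / 2 + - (INR h + 1) / 2 = - INR h.+1 by rewrite S_INR; field.
  by rewrite Rpower_Ropp Rpower_pow /=; lra.
rewrite /theta -/r /= Rmult_1_r.
have -> : r * sqrt eps * (r * sqrt eps) = r * r * (sqrt eps * sqrt eps) by ring.
by rewrite rr sqrt_sqrt; [field; lra | lra].
Qed.

Section SamplingRate.
Variables (eps : R) (L h : nat).
Hypotheses (heps : 0 < eps < 1) (hL : eps = / 2 ^ L) (hh : (h < L)%N).

Lemma sampling_rate_le_half : 0 < 2 ^ h * eps /\ 2 * (2 ^ h * eps) <= 1.
Proof.
have ph : 0 < 2 ^ h by apply: pow_lt; lra.
have hL' : 2 ^ h * 2 <= 2 ^ L.
  have -> : 2 ^ h * 2 = 2 ^ h.+1 by rewrite /=; ring.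
  by apply: Rle_pow; [lra | apply/leP].
have : eps * 2 ^ L = 1 by rewrite hL; field; apply: pow_nonzero; lra.
split; nra.
Qed.

Lemma theta_le_half : theta eps h <= 1/2.
Proof.
have th0 := @theta_pos eps h ltac:(lra).
have ph : 1 <= 2 ^ h by apply: pow_R1_Rle; lra.
have := sampling_rate_le_half => rate.
have : theta eps h ^ 2 <= 1/4.
  rewrite theta_sq; last lra.
  apply: (Rmult_le_reg_r (2 * 2 ^ h)); first lra.
  rewrite /Rdiv Rmult_assoc Rinv_l; nra.
by rewrite /=; nra.
Qed.

Lemma rate_theta_sq : 2 ^ h * eps * theta eps h ^ 2 = eps ^ 2 / 2.
Proof. by rewrite theta_sq; [field; apply: pow_nonzero | ]; lra. Qed.

End SamplingRate.

Lemma sample_size n neps h eps :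
  INR n * eps = INR neps -> 2 ^ h * eps <= 1 ->
  INR (2 ^ h * neps)%N = INR n * (2 ^ h * eps) /\ (2 ^ h * neps <= n)%N.
Proof.
move=> hneps rate1; have nR := pos_INR n.
have MR : INR (2 ^ h * neps)%N = INR n * (2 ^ h * eps).
  rewrite mult_INR INR_expn -hneps (_ : INR 2 = 2); first ring.
  by rewrite /=; lra.
by split => //; apply/leP/INR_le; rewrite MR; nra.
Qed.

Lemma chernoff_exponent_le al th G Pstar gamma eps :
  0 < Pstar -> 0 < gamma -> 0 <= G <= Pstar -> 0 <= al -> 0 <= th ->
  al * th ^ 2 = eps ^ 2 / 2 ->
  al * (th + 2/3 * th ^ 2) * G / (gamma * Pstar) -
  th * (al * G + al * th * Pstar) / (gamma * Pstar) <= - (eps ^ 2) / (6 * gamma).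
Proof.
move=> P0 g0 G0P al0 th0 alth.
have -> : al * (th + 2/3 * th ^ 2) * G / (gamma * Pstar) -
    th * (al * G + al * th * Pstar) / (gamma * Pstar) =
    (al * th ^ 2) * (2/3 * G / Pstar - 1) / gamma by field; lra.
have -> : - (eps ^ 2) / (6 * gamma) = (al * th ^ 2) * (- 1/3) / gamma.
  by rewrite alth; field; lra.
apply: Rmult_le_compat_r; first exact/Rlt_le/Rinv_0_lt_compat.
apply: Rmult_le_compat_l; first nra.
have : G / Pstar <= 1 by apply: (Rmult_le_reg_r Pstar) => //; field_simplify; lra.
lra.
Qed.
Theorem mainTheorem5
  (m k n : nat) (hm : (0 < m)%N) (hk : (0 < k)%N) (hn : (0 < n)%N)
  (b : 'I_m -> R) (hb : forall i, 0 < b i)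
  (f : 'I_n -> vec k -> xR) (hf : forall t, inG (f t))
  (A : 'I_n -> 'I_m -> 'I_k -> R) (hA : forall t i j, 0 <= A t i j)
  (Pstar : R) (hPstar : is_lub (offline_vals f A b) Pstar) (hPpos : 0 < Pstar)
  (gamma : R) (hgamma : 0 < gamma)
  (hgA : forall t (x : vec k) r, f t x = Some r -> 0 <= r ->
           forall i, mv (A t) x i / b i <= gamma)
  (hgf : forall t (x : vec k) r, f t x = Some r -> r <= gamma * Pstar)
  (eps : R) (heps : 0 < eps < 1)
  (L : nat) (hL : eps = / 2 ^ L)
  (neps : nat) (hneps : INR n * eps = INR neps)
  (h : nat) (hh : (h < L)%N) :
  prob_perm (fun sigma : {perm 'I_n} =>
     sup_gt (sample_vals f A b eps h (2 ^ h * neps)%N sigma)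
            ((1 + 2 * theta eps h) / (1 - theta eps h) * Pstar))
  <= exp (- (eps ^ 2) / (6 * gamma)).
Proof.
(* Only the value bound [hgf] enters. *)
have eps0 : 0 < eps by lra.
have [rate0 rate_half] := sampling_rate_le_half heps hL hh.
have th0 := theta_pos h eps0.
have th_half := theta_le_half heps hL hh.
have [p [g [p0 hg g_bnd hG]]] := reduced_values hb hf hA hPstar hgf.
have [MR Mn] := sample_size (h := h) hneps ltac:(lra).
have g0 t : 0 <= g t by exact: proj1 (g_bnd t).
have G_bnd : 0 <= \big[Rplus/R0]_(t < n) g t <= Pstar.
  split; first by apply: Rsum_ge0 => t _.
  have : 0 <= dotp p b by apply: dotp_ge0 => // i; exact/Rlt_le.
  lra.
have c0 : 0 < gamma * Pstar by exact: Rmult_lt_0_compat.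
have th1 : 0 <= theta eps h < 1 by lra.
have th01 : 0 <= theta eps h <= 1/2 by lra.
apply: Rle_trans (sampled_sum_tail hn Mn c0 g_bnd th01
  (fun s => sampled_reduced_sum_gt p0 g0 hg hG th1 rate0)) _.
apply: exp_le_exp; rewrite MR (_ : INR n * (2 ^ h * eps) / INR n = 2 ^ h * eps).
  apply: chernoff_exponent_le hPpos hgamma G_bnd _ _ (rate_theta_sq h heps); lra.
by field; apply/not_0_INR/eqP; rewrite -lt0n.
Qed.
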